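(* For every $n\ge 2$, $b^*_{1,n-1}\le c_n-\frac{c_n(1-2c_n)}{n}$.
   Context: A graph on $N$ vertices is even-degenerate if there is an ordering $v_1,\dots,v_N$ of its vertices such that for each $1\le i\le N-2$, $v_i$ has an even number of neighbours in $\{v_{i+1},\dots,v_N\}$. $c_n$ is the probability that $G(n,1/2)$ is not even-degenerate. Given fixed vertex sets $V,V'$ with $|V|=|V'|=m+s$ and $S\subseteq V\cap V'$ with $|S|=s$, a pair of random graphs $(G,G')$ is parity-linked on $S$ if it is distributed as a pair of independent $G\sim G(V,1/2)$, $G'\sim G(V',1/2)$ conditioned on the events $G[S]=G'[S]$ and $e(G)\equiv e(G')\pmod 2$. Then $b^*_{m,s}$ denotes the probability that both $G$ and $G'$ are not even-degenerate (this depends only on $m$ and $s$). *)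

From mathcomp Require Import all_boot all_order all_algebra.
From mathcomp Require Import fingroup perm.
Set Implicit Arguments. Unset Strict Implicit. Unset Printing Implicit Defensive.
Import Order.TTheory GRing.Theory Num.Theory.
Local Open Scope ring_scope.

(* A simple graph on the labelled vertex set 'I_n is its edge set:
   a set of 2-element subsets of 'I_n. *)
Definition vpairs (n : nat) : {set {set 'I_n}} := [set e : {set 'I_n} | #|e| == 2%N].

(* All graphs on 'I_n ; G(n,1/2) is the uniform distribution on this set. *)
Definition graphs (n : nat) : {set {set {set 'I_n}}} := powerset (vpairs n).

Definition nedges n (E : {set {set 'I_n}}) : nat := #|E|.

Definition induced n (S : {set 'I_n}) (E : {set {set 'I_n}}) : {set {set 'I_n}} :=
  [set e in E | e \subset S].

(* even-degenerate: there is an ordering v_0,...,v_{n-1} (v_k = p k) such that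
   for every position i with i+2 < n (i.e. 1 <= i+1 <= n-2 in 1-based indexing),
   v_i has an even number of neighbours among v_{i+1},...,v_{n-1}. *)
Definition even_degenerate n (E : {set {set 'I_n}}) : bool :=
  [exists p : {perm 'I_n},
    [forall i : 'I_n, (i.+2 < n)%N ==>
       ~~ odd #|[set j : 'I_n | (i < j)%N && ([set p i; p j] \in E)]| ]].

Definition c_ (n : nat) : rat :=
  #|[set E in graphs n | ~~ even_degenerate E]|%:R / #|graphs n|%:R.

Definition plinked N (S : {set 'I_N}) (P : {set {set 'I_N}} * {set {set 'I_N}}) : bool :=
  [&& P.1 \in graphs N, P.2 \in graphs N,
      induced S P.1 == induced S P.2 & odd (nedges P.1) == odd (nedges P.2)].

Definition bstar N (S : {set 'I_N}) : rat :=
  #|[set P | plinked S P && ~~ even_degenerate P.1 && ~~ even_degenerate P.2]|%:R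
  / #|[set P | plinked S P]|%:R.

From mathcomp Require Import all_boot all_order all_algebra.
From mathcomp Require Import fingroup perm zify ring lra.
Set Implicit Arguments. Unset Strict Implicit. Unset Printing Implicit Defensive.
Import Order.TTheory GRing.Theory Num.Theory.
Local Open Scope ring_scope.

(* Write f for the indicator of "not even-degenerate" on the cube of graphs
   on 'I_n, N for the number of vertex pairs, and v for the vertex outside S.
   A parity-linked pair is (G, G + B) with B an even set of edges at v, so by
   Fourier inversion on the cube
     b* = 4^-N sum_X fhat(X)^2 w_v(X),   c = 4^-N sum_X fhat(X)^2,
   where w_v(X) = [X misses star v] + [X contains star v] is at most 1.
   Every X other than the empty and the full edge set splits some star, so
   summing c - b* over the n (symmetric) vertices leaves at least
   c - 4^-N (fhat(0)^2 + fhat(E)^2) >= c - 2c^2. *)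

Section SymmetricDifference.
Variable T : finType.
Implicit Types A B S X : {set T}.

Definition symd A B := (A :\: B) :|: (B :\: A).

Lemma in_symd x A B : (x \in symd A B) = (x \in A) (+) (x \in B).
Proof. by rewrite !inE; case: (x \in A); case: (x \in B). Qed.

Lemma symdC A B : symd A B = symd B A.
Proof. by apply/setP => x; rewrite !in_symd addbC. Qed.

Lemma symdK B : cancel (symd^~ B) (symd^~ B).
Proof. by move=> A; apply/setP => x; rewrite !in_symd -addbA addbb addbF. Qed.

Lemma symdKl A : cancel (symd A) (symd A).
Proof. by move=> B; rewrite (symdC A B) symdC symdK. Qed.

Lemma symd0 A : symd A set0 = A.
Proof. by apply/setP => x; rewrite in_symd inE addbF. Qed.

Lemma symdd A : symd A A = set0.
Proof. by apply/setP => x; rewrite in_symd inE addbb. Qed.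

Lemma symd_eq0 A B : (symd A B == set0) = (A == B).
Proof.
apply/eqP/eqP => [/setP h | ->]; last exact: symdd.
by apply/setP => x; move: (h x); rewrite in_symd inE; do 2!case: (_ \in _).
Qed.

Lemma symd_sub A B X : A \subset X -> B \subset X -> symd A B \subset X.
Proof. by move=> hA hB; rewrite subUset !(subset_trans (subsetDl _ _)). Qed.

Lemma setI_symd S A B : S :&: symd A B = symd (S :&: A) (S :&: B).
Proof.
by apply/setP => x; rewrite inE !in_symd !inE; do 3!case: (_ \in _).
Qed.

Lemma odd_card_symd A B : odd #|symd A B| = odd #|A| (+) odd #|B|.
Proof.
have disj : (A :\: B) :&: (B :\: A) = set0.
  by apply/setP => x; rewrite !inE; do 2!case: (_ \in _).
rewrite /symd cardsU disj cards0 subn0 -(cardsID B A) -(cardsID A B).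
by rewrite setIC !oddD addbACA addbb.
Qed.

End SymmetricDifference.

Section Characters.
Variable T : finType.
Implicit Types A B S X : {set T}.

Definition chi S A : rat := (-1) ^+ #|S :&: A|.

Lemma chiC S A : chi S A = chi A S.
Proof. by rewrite /chi setIC. Qed.

Lemma chi0 A : chi set0 A = 1.
Proof. by rewrite /chi set0I cards0. Qed.

Lemma chi_symd S A B : chi S (symd A B) = chi S A * chi S B.
Proof. by rewrite /chi -signr_odd setI_symd odd_card_symd signr_addb !signr_odd. Qed.

Lemma norm_chi S A : `|chi S A| = 1.
Proof. by rewrite /chi normrX normrN1 expr1n. Qed.

(* Pairing B with B + {e}, for some e in S :&: X, cancels the sum. *)
Lemma sum_chi X S : \sum_(B in powerset X) chi S B =
  if S :&: X == set0 then (2 ^ #|X|)%:R else 0.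
Proof.
case: ifP => [/eqP SX0 | /set0Pn [e]].
  rewrite -card_powerset -sumr_const; apply: eq_bigr => B.
  rewrite powersetE /chi => BX; suff -> : S :&: B = set0 by rewrite cards0.
  by apply/eqP; rewrite -subset0 -SX0 setIS.
rewrite inE => /andP [eS eX].
set s := (X in X = _).
have s_opp : s = - s.
  rewrite {1}/s (reindex_inj (can_inj (symdK [set e]))) /= -sumrN.
  apply: eq_big => [B | B _]; last first.
    have eS1 : S :&: [set e] = [set e] by apply/setIidPr; rewrite sub1set.
    by rewrite chi_symd {2}/chi eS1 cards1 mulrN1.
  rewrite !powersetE; apply/idP/idP => [hB | hB]; last first.
    by apply: symd_sub; rewrite ?sub1set.
  by rewrite -(symdK [set e] B); apply: symd_sub; rewrite ?sub1set.
have : 2 * s = 0 by rewrite mulr2n mulrDl mul1r {2}s_opp subrr.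
by move/eqP; rewrite mulf_eq0 pnatr_eq0 => /eqP.
Qed.

Definition even_weight X S : rat := (S :&: X == set0)%:R + (X \subset S)%:R.

(* 1 + (-1)^|B| = 2 [B even] and chi (symd S X) B = (-1)^|B| chi S B on X. *)
Lemma sum_chi_even X S : \sum_(B in powerset X | ~~ odd #|B|) chi S B =
  (2 ^ #|X|)%:R / 2 * even_weight X S.
Proof.
rewrite big_mkcondr /=.
transitivity (\sum_(B in powerset X) (chi S B + chi (symd S X) B) / 2).
  apply: eq_bigr => B; rewrite powersetE => BX.
  have chiX : chi X B = (-1) ^+ #|B| by rewrite /chi (setIidPr BX).
  rewrite (chiC (symd S X)) chi_symd !(chiC B) chiX -signr_odd.
  by case: (odd #|B|) => /=; field.
rewrite -mulr_suml big_split /= !sum_chi.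
have -> : symd S X :&: X = X :\: S.
  by apply/setP => x; rewrite in_setI in_symd in_setD; do 2!case: (_ \in _).
rewrite setD_eq0 /even_weight.
by case: (_ == _); case: (X \subset S) => /=; field.
Qed.

End Characters.

Section Fourier.
Variables (T : finType) (E : {set T}).
Implicit Types (f : {set T} -> rat) (B K S X : {set T}).
Let M : rat := (2 ^ #|E|)%:R.

Lemma exp2_card_neq0 : M != 0.
Proof. by rewrite pnatr_eq0 expn_eq0. Qed.

Definition fhat f S := \sum_(G in powerset E) f G * chi S G.

Lemma fourier_inversion f K : K \subset E ->
  \sum_(S in powerset E) fhat f S * chi S K = M * f K.
Proof.
move=> KE; have KP : K \in powerset E by rewrite powersetE.
under eq_bigr do rewrite mulr_suml.
rewrite exchange_big /= (bigD1 K) //=.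
have ortho H : \sum_(S in powerset E) f H * chi S H * chi S K =
    f H * (if symd H K :&: E == set0 then M else 0).
  rewrite -sum_chi mulr_sumr; apply: eq_bigr => S _.
  by rewrite -mulrA (chiC (symd H K)) chi_symd.
rewrite ortho symdd set0I eqxx big1 ?addr0 1?mulrC // => H /andP [HE HK].
rewrite ortho (setIidPl _) ?symd_sub -?powersetE //.
by rewrite symd_eq0 (negbTE HK) mulr0.
Qed.

Lemma fhat_autocorr f B : B \subset E ->
  \sum_(G in powerset E) f G * f (symd G B) =
  M^-1 * \sum_(S in powerset E) fhat f S ^+ 2 * chi S B.
Proof.
move=> BE.
transitivity (\sum_(G in powerset E) f G *
   (M^-1 * \sum_(S in powerset E) fhat f S * chi S (symd G B))).
  apply: eq_bigr => G; rewrite powersetE => GE.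
  by rewrite fourier_inversion ?symd_sub // mulKf ?exp2_card_neq0.
under eq_bigr do rewrite mulrCA.
rewrite -mulr_sumr; congr (_ * _).
under eq_bigr do rewrite mulr_sumr.
rewrite exchange_big /=; apply: eq_bigr => S _.
transitivity (fhat f S * chi S B * \sum_(G in powerset E) f G * chi S G).
  by rewrite mulr_sumr; apply: eq_bigr => G _; rewrite chi_symd; ring.
by rewrite -/(fhat f S); ring.
Qed.

Lemma parseval f : \sum_(G in powerset E) f G ^+ 2 =
  M^-1 * \sum_(S in powerset E) fhat f S ^+ 2.
Proof.
transitivity (M^-1 * \sum_(S in powerset E) fhat f S ^+ 2 * chi S set0).
  rewrite -fhat_autocorr ?sub0set //.
  by apply: eq_bigr => G _; rewrite symd0 expr2.
by congr (_ * _); apply: eq_bigr => S _; rewrite chiC chi0 mulr1.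
Qed.

Lemma sum_even_autocorr f X : X \subset E ->
  \sum_(G in powerset E) \sum_(B in powerset X | ~~ odd #|B|) f G * f (symd G B) =
  M^-1 * \sum_(S in powerset E) fhat f S ^+ 2 *
    ((2 ^ #|X|)%:R / 2 * even_weight X S).
Proof.
move=> XE; rewrite exchange_big /=.
transitivity (\sum_(B in powerset X | ~~ odd #|B|)
   M^-1 * \sum_(S in powerset E) fhat f S ^+ 2 * chi S B).
  apply: eq_bigr => B /andP [+ _]; rewrite powersetE => BX.
  by apply: fhat_autocorr; apply: subset_trans BX XE.
rewrite -mulr_sumr exchange_big /=; congr (_ * _); apply: eq_bigr => S _.
by rewrite -mulr_sumr sum_chi_even.
Qed.

Lemma fhat0 f : fhat f set0 = \sum_(G in powerset E) f G.
Proof. by apply: eq_bigr => G _; rewrite chi0 mulr1. Qed.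

Lemma norm_fhat_le f S : (forall G, 0 <= f G) -> `|fhat f S| <= fhat f set0.
Proof.
move=> f_ge0; rewrite fhat0; apply: le_trans (ler_norm_sum _ _ _) _.
by apply: ler_sum => G _; rewrite normrM norm_chi mulr1 ger0_norm.
Qed.

End Fourier.

Lemma sub_setC1 (T : finType) (A : {set T}) v : (A \subset [set~ v]) = (v \notin A).
Proof.
apply/subsetP/idP => [h | h u uA]; first by apply/negP => /h; rewrite setC11.
by rewrite in_setC1; apply: contraNneq h => <-.
Qed.

Lemma setC1_of_card (T : finType) (S : {set T}) :
  (0 < #|T|)%N -> #|S| = #|T|.-1 -> exists v, S = [set~ v].
Proof.
move=> T0 hS; have /cards1P [v hv] : #|~: S| == 1%N.
  by apply/eqP; move: (cardsC S); rewrite hS; lia.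
by exists v; rewrite -hv setCK.
Qed.

Section Graphs.
Variable n : nat.
Local Notation graph := {set {set 'I_n}}.
Implicit Types (G B : graph) (e : {set 'I_n}) (v w : 'I_n) (t : {perm 'I_n}).

Definition not_ed G : rat := (~~ even_degenerate G)%:R.

Definition star v : graph := [set e in vpairs n | v \in e].

Lemma star_sub v : star v \subset vpairs n.
Proof. by apply/subsetP => e; rewrite inE => /andP []. Qed.

Definition even_star_corr (f : graph -> rat) v :=
  \sum_(G in graphs n) \sum_(B in powerset (star v) | ~~ odd #|B|) f G * f (symd G B).

Lemma mem_induced (S : {set 'I_n}) G e :
  (e \in induced S G) = (e \in G) && (e \subset S).
Proof. by rewrite in_set. Qed.

Lemma plinked_symd v G B : G \in graphs n ->
  plinked [set~ v] (G, symd G B) = (B \subset star v) && ~~ odd #|B|.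
Proof.
move=> hG; rewrite /plinked /= hG /= /nedges odd_card_symd.
have -> : (odd #|G| == odd #|G| (+) odd #|B|) = ~~ odd #|B|.
  by case: (odd #|G|); case: (odd #|B|).
rewrite andbA; congr (_ && _).
move: hG; rewrite /graphs !powersetE => hG.
apply/andP/idP => [[hGB /eqP hind] | hB].
  apply/subsetP => e eB.
  have BV : B \subset vpairs n by rewrite -(symdKl G B); apply: symd_sub.
  have eV : e \in vpairs n := subsetP BV e eB.
  rewrite inE eV /=; apply: contraT => ve.
  move/setP: hind => /(_ e).
  by rewrite !mem_induced in_symd sub_setC1 ve eB !andbT; case: (e \in G).
split; first by rewrite symd_sub // (subset_trans hB (star_sub v)).
apply/eqP/setP => e; rewrite !mem_induced in_symd sub_setC1.
case ve: (v \in e); rewrite ?andbF //=.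
suff -> : (e \in B) = false by rewrite addbF.
by apply/negP => /(subsetP hB); rewrite inE ve andbF.
Qed.

Lemma card_plinked (g : pred graph) v :
  #|[set P | plinked [set~ v] P && g P.1 && g P.2]|%:R =
  even_star_corr (fun G => (g G)%:R) v.
Proof.
transitivity (\sum_(G : graph) \sum_(G' : graph)
    ((plinked [set~ v] (G, G') && g G && g G')%:R : rat)).
  rewrite pair_bigA /= -sum1_card natr_sum big_mkcond /=.
  by apply: eq_bigr => -[G G'] _; rewrite inE /=; case: (_ && _).
rewrite /even_star_corr [RHS]big_mkcond /=; apply: eq_bigr => G _.
case: ifP => hG; last by apply: big1 => G' _; rewrite /plinked /= hG.
rewrite (reindex_inj (can_inj (symdKl G))) [RHS]big_mkcond /=.
apply: eq_bigr => B _; rewrite plinked_symd // powersetE.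
by case: ifP => _ /=; case: (g G); case: (g _); rewrite ?mulr1 ?mulr0.
Qed.

Definition relabel t G : graph := [set t @: (e : {set _}) | e in G].

Lemma relabel_inj t : injective (relabel t).
Proof. by apply: imset_inj; apply: imset_inj; apply: perm_inj. Qed.

Lemma mem_relabel t G e : (t @: e \in relabel t G) = (e \in G).
Proof. by apply: mem_imset; apply: imset_inj; apply: perm_inj. Qed.

Lemma card_relabel t G : #|relabel t G| = #|G|.
Proof. by apply: card_imset; apply: imset_inj; apply: perm_inj. Qed.

Lemma imset_permK t e : t @: ((t^-1)%g @: e) = e.
Proof. by rewrite -imset_comp (eq_imset _ (permKV t)) imset_id. Qed.

Lemma relabelK t G : relabel (t^-1)%g (relabel t G) = G.
Proof.
rewrite /relabel -imset_comp -[in RHS](imset_id G); apply: eq_imset => e /=.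
by rewrite -{2}(invgK t) imset_permK.
Qed.

Lemma relabel_symd t G B : relabel t (symd G B) = symd (relabel t G) (relabel t B).
Proof. by apply/setP => e; rewrite -(imset_permK t e) in_symd !mem_relabel in_symd. Qed.

Lemma relabel_sub t G (A B : graph) :
  (forall e, (t @: e \in B) = (e \in A)) -> (relabel t G \subset B) = (G \subset A).
Proof.
move=> hAB; apply/subsetP/subsetP => sub e.
  by move=> eG; rewrite -hAB; apply: sub; rewrite mem_relabel.
by case/imsetP => e' e'G ->; rewrite hAB; apply: sub.
Qed.

Lemma even_degenerate_relabel t G :
  even_degenerate G -> even_degenerate (relabel t G).
Proof.
move=> /existsP [p /forallP hp]; apply/existsP; exists (p * t)%g.
apply/forallP => i.
suff -> : [set j : 'I_n | (i < j)%N && ([set (p * t)%g i; (p * t)%g j] \in relabel t G)] =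
          [set j : 'I_n | (i < j)%N && ([set p i; p j] \in G)] by exact: hp.
apply/setP => j; rewrite !inE !permM.
by rewrite -[[set t (p j)]]imset_set1 -imsetU1 mem_relabel.
Qed.

Lemma not_ed_relabel t G : not_ed (relabel t G) = not_ed G.
Proof.
rewrite /not_ed; congr (~~ _ )%:R; apply/idP/idP; last exact: even_degenerate_relabel.
by move=> /(even_degenerate_relabel (t^-1)%g); rewrite relabelK.
Qed.

Lemma even_star_corr_relabel (f : graph -> rat) v w :
  (forall t G, f (relabel t G) = f G) -> even_star_corr f w = even_star_corr f v.
Proof.
move=> f_inv; pose t := tperm v w.
rewrite /even_star_corr (reindex_inj (@relabel_inj t)) /=.
apply: eq_big => [G | G _].
  by rewrite !powersetE; apply: relabel_sub => e; rewrite !inE card_imset //; apply: perm_inj.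
rewrite (reindex_inj (@relabel_inj t)) /=.
apply: eq_big => [B | B _]; last by rewrite -relabel_symd !f_inv.
rewrite card_relabel !powersetE; congr (_ && _); apply: relabel_sub => e.
rewrite !inE card_imset; last exact: perm_inj.
have -> : w = t v by rewrite tpermL.
by rewrite (mem_imset _ _ (@perm_inj _ t)).
Qed.

End Graphs.

Section Bound.
Variables (n : nat) (n_ge2 : (2 <= n)%N).
Local Notation E := (vpairs n).
Local Notation M := ((2 ^ #|vpairs n|)%:R : rat).
Local Notation F X := (fhat (vpairs n) (@not_ed n) X ^+ 2).
Implicit Types (X : {set {set 'I_n}}) (v w : 'I_n).

Lemma star_neq0 w : star w != set0.
Proof.
have [u uw] : exists u, u != w.
  have : [set~ w] != set0 by rewrite -card_gt0 cardsC1 card_ord; lia.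
  by case/set0Pn => u; rewrite in_setC1; exists u.
apply/set0Pn; exists [set w; u].
by rewrite !inE cards2 (eq_sym w) uw eqxx.
Qed.

Lemma exists_star_split X : X \subset E -> X != set0 -> X != E ->
  exists w, (X :&: star w != set0) && ~~ (star w \subset X).
Proof.
move=> XE /set0Pn [e' e'X] XnE.
have [e eE eX] : exists2 e, e \in E & e \notin X.
  by apply/subsetPn; apply: contra XnE => EX; rewrite eqEsubset XE.
move: (eE); rewrite inE => /cards2P [a [b [ab eab]]]; subst e.
have [aX | aX] := eqVneq (X :&: star a) set0; last first.
  exists a; rewrite aX /=; apply/subsetPn; exists [set a; b] => //.
  by rewrite inE eE set21.
have e'E : e' \in E := subsetP XE _ e'X.
move: (e'E); rewrite inE => /cards2P [c [d [cd e'cd]]]; subst e'.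
have ca : c != a.
  apply/eqP => ca; move/setP: aX => /(_ [set c; d]).
  by rewrite !inE e'X cards2 cd ca eqxx.
exists c; apply/andP; split.
  by apply/set0Pn; exists [set c; d]; rewrite !inE e'X cards2 cd eqxx.
apply/subsetPn; exists [set c; a]; first by rewrite !inE cards2 ca eqxx.
apply/negP => caX; move/setP: aX => /(_ [set c; a]).
by rewrite !inE caX cards2 ca !eqxx orbT.
Qed.

Lemma even_weight_star_le1 w X : even_weight (star w) X <= 1.
Proof.
rewrite /even_weight; case: eqP => [Xw0 | _]; last by case: (_ \subset _).
suff -> : (star w \subset X) = false by [].
apply: contraNF (star_neq0 w) => wX.
by rewrite -subset0 -Xw0 subsetI wX subxx.
Qed.

Lemma sum_even_weight_defect X : X \subset E -> X != set0 -> X != E ->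
  1 <= \sum_(w < n) (1 - even_weight (star w) X).
Proof.
move=> XE X0 XnE; have [w /andP [split1 split2]] := exists_star_split XE X0 XnE.
rewrite (bigD1 w) //= {1}/even_weight (negbTE split1) (negbTE split2) subr0.
by rewrite lerDl sumr_ge0 // => u _; rewrite subr_ge0 even_weight_star_le1.
Qed.

Lemma sum_not_ed : \sum_(G in graphs n) @not_ed n G = M * c_ n.
Proof.
rewrite /c_ card_powerset mulrC divfK ?pnatr_eq0 ?expn_eq0 //.
rewrite -sum1_card natr_sum [RHS]big_mkcond [LHS]big_mkcond /=.
by apply: eq_bigr => G _; rewrite !in_set /not_ed; case: (G \subset _); case: even_degenerate.
Qed.

Lemma not_ed_sq G : @not_ed n G ^+ 2 = not_ed G.
Proof. by rewrite /not_ed; case: even_degenerate; rewrite ?expr0n ?expr1n. Qed.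

Lemma sum_fhat_sq : \sum_(X in powerset E) F X = M * M * c_ n.
Proof.
have := parseval E (@not_ed n); under eq_bigr do rewrite not_ed_sq.
by rewrite sum_not_ed => h; rewrite -[LHS](mulVKf (exp2_card_neq0 E)) -h mulrA.
Qed.

Lemma fhat_not_ed0 : fhat E (@not_ed n) set0 = M * c_ n.
Proof. by rewrite fhat0 sum_not_ed. Qed.

Lemma fhat_not_ed_sq_le X : F X <= (M * c_ n) ^+ 2.
Proof.
rewrite -fhat_not_ed0.
have : `|fhat E (@not_ed n) X| <= fhat E (@not_ed n) set0.
  by apply: norm_fhat_le => G; rewrite /not_ed ler0n.
rewrite ler_norml => /andP [lo hi].
nra.
Qed.

Lemma even_weight_star0 w : even_weight (star w) set0 = 1.
Proof. by rewrite /even_weight set0I eqxx subset0 (negbTE (star_neq0 w)) addr0. Qed.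

Lemma even_star_corr1 w :
  even_star_corr (fun _ => 1) w = M * ((2 ^ #|star w|)%:R / 2).
Proof.
rewrite /even_star_corr /graphs.
transitivity (\sum_(G in powerset E) ((2 ^ #|star w|)%:R / 2 : rat)).
  apply: eq_bigr => G _.
  rewrite -[RHS]mulr1 -[X in _ = _ * X](even_weight_star0 w) -sum_chi_even.
  by apply: eq_bigr => B _; rewrite chi0 mulr1.
by rewrite sumr_const card_powerset [RHS]mulr_natl.
Qed.

Definition bstar_at w := even_star_corr (@not_ed n) w / even_star_corr (fun _ => 1) w.

Lemma bstar_at_fourier w :
  bstar_at w = (M * M)^-1 * \sum_(X in powerset E) F X * even_weight (star w) X.
Proof.
rewrite /bstar_at even_star_corr1 /even_star_corr /graphs.
rewrite sum_even_autocorr; last exact: star_sub.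
under eq_bigr do rewrite mulrCA.
rewrite -mulr_sumr.
have K0 : (2 ^ #|star w|)%:R / 2 != 0 :> rat.
  by rewrite mulf_neq0 ?invr_eq0 ?pnatr_eq0 ?expn_eq0.
move: K0 (exp2_card_neq0 E); move: (_ / 2) (2 ^ #|E|)%:R (\sum_(X in _) _) => K a s K0 a0.
by field; apply/andP.
Qed.

Lemma sum_c_sub_bstar_at : \sum_(w < n) (c_ n - bstar_at w) =
  (M * M)^-1 * \sum_(X in powerset E) F X * \sum_(w < n) (1 - even_weight (star w) X).
Proof.
have cE : c_ n = (M * M)^-1 * \sum_(X in powerset E) F X.
  by rewrite sum_fhat_sq mulKf // mulf_neq0 ?exp2_card_neq0.
under eq_bigr do rewrite bstar_at_fourier cE -mulrBr -sumrB.
rewrite -mulr_sumr exchange_big /=; congr (_ * _); apply: eq_bigr => X _.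
by rewrite mulr_sumr; apply: eq_bigr => w _; rewrite mulrBr mulr1.
Qed.

Lemma sum_fhat_sq_split : \sum_(X in powerset E) F X =
  F set0 + F E + \sum_(X in powerset E | (X != set0) && (X != E)) F X.
Proof.
have E0 : E != set0.
  apply: (contraNneq _ (star_neq0 (Ordinal (ltnW n_ge2)))) => E0.
  by rewrite -subset0 -E0 star_sub.
rewrite (bigD1 set0) ?powersetE ?sub0set //= (bigD1 E) /= ?powersetE ?subxx ?E0 //.
by rewrite addrA; congr (_ + _); apply: eq_bigl => X; rewrite andbA.
Qed.

Lemma sum_fhat_sq_defect_ge :
  \sum_(X in powerset E | (X != set0) && (X != E)) F X <=
  \sum_(X in powerset E) F X * \sum_(w < n) (1 - even_weight (star w) X).
Proof.
rewrite big_mkcondr /=; apply: ler_sum => X; rewrite powersetE => XE.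
have defect_ge0 : 0 <= \sum_(w < n) (1 - even_weight (star w) X).
  by apply: sumr_ge0 => w _; rewrite subr_ge0 even_weight_star_le1.
case: ifP => [/andP [X0 XnE] | _]; last by rewrite mulr_ge0 ?sqr_ge0.
by rewrite -[leLHS]mulr1 ler_wpM2l ?sqr_ge0 ?sum_even_weight_defect.
Qed.

Lemma c_sub_2c_sq_le : c_ n * (1 - 2 * c_ n) <= \sum_(w < n) (c_ n - bstar_at w).
Proof.
rewrite sum_c_sub_bstar_at ler_pdivlMl ?mulr_gt0 ?ltr0n ?expn_gt0 //.
apply: le_trans sum_fhat_sq_defect_ge.
have := sum_fhat_sq_split; rewrite sum_fhat_sq fhat_not_ed0.
have := fhat_not_ed_sq_le E.
move: (fhat _ _ _ ^+ 2) (\sum_(X in _ | _) _) (2 ^ #|E|)%:R => FE R m.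
nra.
Qed.

Lemma bstar_at_sym v w : bstar_at w = bstar_at v.
Proof.
by rewrite /bstar_at !(even_star_corr_relabel v w) //; apply: not_ed_relabel.
Qed.

Lemma bstarE v : bstar [set~ v] = bstar_at v.
Proof.
rewrite /bstar (card_plinked (fun G => ~~ even_degenerate G)).
have -> : [set P | plinked [set~ v] P] =
          [set P | plinked [set~ v] P && predT P.1 && predT P.2].
  by apply/setP => P; rewrite !inE !andbT.
by rewrite card_plinked.
Qed.

End Bound.

Theorem mainTheorem16 (n : nat) (hn : (2 <= n)%N) (S : {set 'I_n})
    (hS : #|S| = n.-1) :
  bstar S <= c_ n - c_ n * (1 - 2 * c_ n) / n%:R.
Proof.
have [v ->] : exists v, S = [set~ v].
  by apply: setC1_of_card; rewrite card_ord // ltnW.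
rewrite bstarE.
have sum_defects : \sum_(w < n) (c_ n - bstar_at w) = n%:R * (c_ n - bstar_at v).
  by under eq_bigr do rewrite (bstar_at_sym v); rewrite sumr_const card_ord mulr_natl.
have n_gt0 : (0 : rat) < n%:R by rewrite ltr0n ltnW.
have := c_sub_2c_sq_le hn; rewrite sum_defects -ler_pdivrMl //.
lra.
Qed.
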